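(* Let $\mathbf{X}=(X_1,\dots,X_d)$ be a random vector with distribution function $F$ such that each $X_i$ is a.s. nonnegative with $0<E(X_i)<\infty$, and let $\|\mathbf{x}\|_F=E(\max(|x_0|,|x_1|X_1,\dots,|x_d|X_d))$ for $\mathbf{x}\in\mathbb{R}^{d+1}$. Then for any $x_1,\dots,x_d>0$, the right-derivative of $t\mapsto\|(t,1/x_1,\dots,1/x_d)\|_F$ at $t=1$ exists and equals $F(x_1,\dots,x_d)$. *)

From HB Require Import structures.
From mathcomp Require Import all_boot all_order all_algebra.
From mathcomp Require Import all_classical all_reals all_analysis.
Set Implicit Arguments. Unset Strict Implicit. Unset Printing Implicit Defensive.
Import Order.TTheory GRing.Theory Num.Theory.
Import numFieldNormedType.Exports.
Local Open Scope classical_set_scope.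
Local Open Scope ring_scope.

(* ||x||_F = E( max(|x_0|, |x_1| X_1, ..., |x_d| X_d) ), x = (x0, x) in R^{d+1},
   the components X_i of the random vector indexed by 'I_d. *)
Definition normF (d0 : measure_display) (T : measurableType d0) (R : realType)
  (P : probability T R) (d : nat) (X : 'I_d -> T -> R) (x0 : R) (x : 'I_d -> R) : R :=
  fine (\int[P]_w ((\big[Num.max/`|x0|]_(i < d) (`|x i| * X i w))%:E)).

Definition distF (d0 : measure_display) (T : measurableType d0) (R : realType)
  (P : probability T R) (d : nat) (X : 'I_d -> T -> R) (x : 'I_d -> R) : R :=
  fine (P [set w | forall i, X i w <= x i]).

(* For t >= 0 the norm is ||(t, 1/x_1, ..., 1/x_d)||_F = E max(t, M) with
   M = max_i X_i / x_i, and F(x_1, ..., x_d) = P(M <= 1).  The difference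
   quotient (max(1 + h, m) - max(1, m)) / h lies in [0, 1] and, as h -> 0+, is
   eventually equal to 1 if m <= 1 and to 0 otherwise; dominated convergence
   therefore turns the right derivative of t |-> E max(t, M) at 1 into
   P(M <= 1). *)

From HB Require Import structures.
From mathcomp Require Import all_boot all_order all_algebra.
From mathcomp Require Import all_classical all_reals all_analysis.
From mathcomp Require Import lra measurable_realfun.
Import Order.TTheory GRing.Theory Num.Theory.
Import numFieldNormedType.Exports.
Local Open Scope classical_set_scope.
Local Open Scope ring_scope.

Lemma bigmax_max_base {disp : Order.disp_t} {T : orderType disp}
    {I : Type} (r : seq I) (F : I -> T) {b c : T} : (b <= c)%O ->
  \big[Order.max/c]_(i <- r) F i = Order.max c (\big[Order.max/b]_(i <- r) F i).
Proof.
move=> bc; elim: r => [|i r IH]; first by rewrite !big_nil max_l.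
by rewrite !big_cons IH maxCA.
Qed.

Section maxr_difference_quotient.
Context {R : realFieldType}.
Implicit Types a m h : R.

Lemma normr_maxr_quotient_le1 a m h : 0 < h ->
  `|(Num.max (a + h) m - Num.max a m) / h| <= 1.
Proof.
move=> h0; have le_max_ah : Num.max a m <= Num.max (a + h) m.
  by rewrite le_max2 // lerDl ltW.
rewrite ger0_norm ?divr_ge0 ?subr_ge0 ?(ltW h0) // ler_pdivrMr // mul1r.
by rewrite !maxEle; case: ifP; case: ifP => *; lra.
Qed.

Lemma maxr_right_quotient_cvg a m :
  (Num.max (a + h) m - Num.max a m) / h @[h --> 0^'+] --> (((m <= a)%R)%:R : R).
Proof.
apply: cvg_near_cst; have [ma|am] := leP m a.
- near=> h; have h0 : 0 < h by near: h; exact: nbhs_right_gt.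
  rewrite max_l; last by rewrite (le_trans ma) // lerDl ltW.
  by rewrite addrAC subrr add0r divff // gt_eqF.
- near=> h; have h0 : 0 < h by near: h; exact: nbhs_right_gt.
  have h_lt : h < m - a by near: h; apply: nbhs_right_lt; rewrite subr_gt0.
  by rewrite max_r ?subrr ?mul0r //; lra.
Unshelve. all: by end_near.
Qed.

End maxr_difference_quotient.

Section integrable_maxr.
Context d (T : measurableType d) (R : realType).
Variables (mu : {measure set T -> \bar R}) (D : set T).
Hypothesis mD : measurable D.

Lemma integrable_maxr (f g : T -> R) :
  mu.-integrable D (EFin \o f) -> mu.-integrable D (EFin \o g) ->
  mu.-integrable D (EFin \o (f \max g)).
Proof.
move=> intf intg.
have intfg := integrableD mD (integrable_abse intf) (integrable_abse intg).
apply: (le_integrable mD _ _ intfg).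
  by apply/measurable_EFinP/measurable_maxr; apply/measurable_EFinP;
    [exact: measurable_int intf | exact: measurable_int intg].
move=> w _ /=; rewrite lee_fin [leRHS]ger0_norm ?addr_ge0 //.
by rewrite maxEle; case: ifP => _; rewrite ?lerDl ?lerDr.
Qed.

End integrable_maxr.

Lemma integrable_bigmaxr d (T : measurableType d) (R : realType)
    (mu : {finite_measure set T -> \bar R}) (D : set T) (mD : measurable D)
    (I : Type) (r : seq I) (c : R) (F : I -> T -> R) :
  (forall i, mu.-integrable D (EFin \o F i)) ->
  mu.-integrable D (EFin \o (fun w => \big[Num.max/c]_(i <- r) F i w)).
Proof.
move=> intF; elim: r => [|i r IH].
  rewrite (_ : (fun w => _) = cst c); last by apply/funext => w; rewrite big_nil.
  exact: finite_measure_integrable_cst.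
rewrite (_ : (fun w => _) = F i \max (fun w => \big[Num.max/c]_(j <- r) F j w)).
  exact: integrable_maxr.
by apply/funext => w; rewrite big_cons.
Qed.

Section right_derivative_Rintegral_maxr.
Context {d} {T : measurableType d} {R : realType}.
Context {mu : {finite_measure set T -> \bar R}} {f : T -> R}.
Hypothesis intf : mu.-integrable setT (EFin \o f).

Let mf : measurable_fun setT f.
Proof. exact/measurable_EFinP/(measurable_int mu). Qed.

Let integrable_maxr_cst c :
  mu.-integrable setT (EFin \o (fun w => Num.max c (f w))).
Proof.
exact: integrable_maxr (finite_measure_integrable_cst _ _ measurableT) intf.
Qed.

Lemma Rintegral_maxr_right_derivative a :
  (\int[mu]_w Num.max (a + h) (f w) - \int[mu]_w Num.max a (f w)) / h
    @[h --> 0^'+] --> fine (mu [set w | f w <= a]).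
Proof.
pose q h w := (Num.max (a + h) (f w) - Num.max a (f w)) / h.
have quotE h :
    (\int[mu]_w Num.max (a + h) (f w) - \int[mu]_w Num.max a (f w)) / h
    = \int[mu]_w q h w.
  rewrite -RintegralB // -RintegralZr //.
  exact: (integrableB measurableT (integrable_maxr_cst (a + h))
    (integrable_maxr_cst a)).
pose C := [set w | f w <= a].
have mC : measurable C.
  have := mf measurableT _ (measurable_itv `]-oo, a]); rewrite setTI.
  by congr measurable; apply/seteqP; split => w /=; rewrite in_itv.
apply/cvg_at_rightP => u [u_gt0 u_cvg0]; under eq_cvg do rewrite quotE.
have mq n : measurable_fun setT (EFin \o q (u n)).
  by apply/measurable_EFinP/measurable_funM/measurable_cst;
    apply/measurable_funB; exact/measurable_maxr/mf.
have mC1 : measurable_fun setT (EFin \o \1_C : T -> \bar R).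
  exact/measurable_EFinP/measurable_indic.
have q_cvg : {ae mu, forall w, setT w ->
    (fun n => (q (u n) w)%:E) @ \oo --> (\1_C w)%:E}.
  apply: aeW => w _; rewrite indicE.
  apply: cvg_EFin; first exact: nearW.
  have := (cvg_at_rightP _ _ _).1 (maxr_right_quotient_cvg a (f w)) u
    (conj u_gt0 u_cvg0).
  suff -> : (w \in C) = (f w <= a) by [].
  by apply/idP/idP => [/set_mem|/mem_set].
have q_le1 : {ae mu, forall w n, setT w ->
    `|(q (u n) w)%:E| <= (EFin \o cst 1%R) w}%E.
  by apply: aeW => w n _ /=; rewrite lee_fin normr_maxr_quotient_le1.
have [_ _ int_cvg] := dominated_convergence measurableT mq mC1 q_cvg
  (finite_measure_integrable_cst _ _ measurableT) q_le1.
rewrite integral_indic // setIT in int_cvg.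
by apply: fine_cvg; rewrite fineK // fin_num_measure.
Qed.

End right_derivative_Rintegral_maxr.

Theorem corollary2p13 (d0 : measure_display) (T : measurableType d0) (R : realType)
  (P : probability T R) (d : nat) (X : 'I_d -> T -> R)
  (Xmeas : forall i, measurable_fun setT (X i))
  (Xnneg : forall i, {ae P, forall w, 0 <= X i w})
  (Xint : forall i, P.-integrable setT (EFin \o X i))
  (Xpos : forall i, (0 < \int[P]_w (X i w)%:E)%E)
  (x : 'I_d -> R) (xpos : forall i, 0 < x i) :
  (fun h : R => (normF P X (1 + h) (fun i => (x i)^-1)
                 - normF P X 1 (fun i => (x i)^-1)) / h)
    @ 0^'+ --> distF P X x.
Proof.
pose M w := \big[Num.max/0]_(i < d) (`|(x i)^-1| * X i w).
have intM : P.-integrable setT (EFin \o M).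
  by apply: integrable_bigmaxr => // i; exact: (integrableZl measurableT _ (Xint i)).
have normFE t : 0 <= t ->
    normF P X t (fun i => (x i)^-1) = \int[P]_w Num.max t (M w).
  move=> t0; congr fine; apply: eq_integral => w _.
  by rewrite (bigmax_max_base _ _ (normr_ge0 t)) ger0_norm.
have le1E w i : (`|(x i)^-1| * X i w <= 1) = (X i w <= x i).
  by rewrite gtr0_norm ?invr_gt0 // mulrC ler_pdivrMr // mul1r.
have -> : distF P X x = fine (P [set w | M w <= 1]).
  congr (fine (P _)); apply/seteqP; split => w /=.
    by move=> Xx; apply/bigmax_leP; split => // i _; rewrite le1E.
  by move=> /bigmax_leP[_ Mw1] i; rewrite -le1E; exact: Mw1.
have := Rintegral_maxr_right_derivative intM 1; apply: cvg_trans.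
apply: near_eq_cvg; near=> h.
have h0 : 0 < h by near: h; exact: nbhs_right_gt.
by rewrite !normFE // addr_ge0 // ltW.
Unshelve. all: by end_near.
Qed.
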